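(* Assume $\lambda_1,\lambda_2>0$ and $\lambda_1\lambda_2<1$, with $\delta_0,\delta_1,\delta_2>0$ fixed, and let $(\theta_1^*,\theta_2^* )$ be the unique fixed point in $(0,\infty)^2$ of $(\theta_1,\theta_2)\mapsto(\varphi_1(\theta_2),\varphi_2(\theta_1))$ and \[ p_1^*=\frac{\delta_0\theta_2^*}{\delta_0\theta_1^*+\delta_0\theta_2^*+2\theta_1^*\theta_2^*},\qquad p_2^*=\frac{\delta_0\theta_1^*}{\delta_0\theta_1^*+\delta_0\theta_2^*+2\theta_1^*\theta_2^*}. \] Then \[ \lim_{\lambda_1\lambda_2\nearrow1}\theta_1^*=\lim_{\lambda_1\lambda_2\nearrow1}\theta_2^*=0\quad\text{and}\quad\lim_{\lambda_1\lambda_2\nearrow1}(p_1^*+p_2^* )=1. \]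
   Context: $\delta_0>0$ is the insurer's absolute risk aversion, $\delta_1,\delta_2>0$ the reinsurers', and $\lambda_1,\lambda_2>0$ the competition degrees. For $i\ne j$ in $\{1,2\}$ and $x>0$, \[ \varphi_i(x)=\frac{(\delta_0+2\delta_i)x^2+(1+\lambda_j)\delta_0\delta_i\,x}{2x^2+\big((1+2\lambda_j)\delta_0+2\lambda_j\delta_i\big)x+\lambda_j(1+\lambda_j)\delta_0\delta_i}. \] In the paper's two-layer reinsurance game, $(\theta_1^*,\theta_2^* )$ are the equilibrium variance-premium loadings of the two reinsurers and $(p_1^*,p_2^* )$ the insurer's equilibrium proportions ceded to them. *)

From Stdlib Require Import Reals.
Open Scope R_scope.

(* varphi_i(x) for reinsurer i (risk aversion di), with lj = lambda_j (j <> i),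
   d0 = delta_0 the insurer's risk aversion. *)
Definition phi (d0 di lj x : R) : R :=
  ((d0 + 2 * di) * x ^ 2 + (1 + lj) * d0 * di * x) /
  (2 * x ^ 2 + ((1 + 2 * lj) * d0 + 2 * lj * di) * x + lj * (1 + lj) * d0 * di).

Definition pstar1 (d0 t1 t2 : R) : R := d0 * t2 / (d0 * t1 + d0 * t2 + 2 * t1 * t2).
Definition pstar2 (d0 t1 t2 : R) : R := d0 * t1 / (d0 * t1 + d0 * t2 + 2 * t1 * t2).

(* Writing A = (d0 + 2 di) x + (1 + lj) d0 di and c = 2 x + (1 + lj) d0, one has
   phi_i(x) = x A / (lj A + x c), i.e. 1 / phi_i(x) = lj / x + c / A, and
   c / A >= 1 / (d0/2 + di).  At a fixed point this gives
   1/t1 >= l2/t2 + 1/M1 >= l1 l2 / t1 + 1/M1 with M1 = d0/2 + d1, so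
   t1 <= (1 - l1 l2) M1, and symmetrically for t2: both loadings vanish as
   l1 l2 -> 1.  Finally 1 - (p1 + p2) = 2 t1 t2 / (d0 t1 + d0 t2 + 2 t1 t2)
   is at most 2 t1 / d0. *)
From Stdlib Require Import Reals Lra Psatz.
Open Scope R_scope.

Lemma phi_factor (d0 di lj x : R) :
  phi d0 di lj x =
  x * ((d0 + 2 * di) * x + (1 + lj) * d0 * di) /
  (lj * ((d0 + 2 * di) * x + (1 + lj) * d0 * di) + x * (2 * x + (1 + lj) * d0)).
Proof. unfold phi; f_equal; ring. Qed.

Lemma phi_inv_lower_bound (d0 di lj x : R) :
  0 < d0 -> 0 < di -> 0 < lj -> 0 < x ->
  lj / x + / (d0 / 2 + di) <= / phi d0 di lj x.
Proof.
  intros Hd0 Hdi Hlj Hx.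
  rewrite phi_factor.
  set (A := (d0 + 2 * di) * x + (1 + lj) * d0 * di).
  set (c := 2 * x + (1 + lj) * d0).
  assert (HA : 0 < A).
  { unfold A. assert (0 < (1 + lj) * d0 * di) by (repeat apply Rmult_lt_0_compat; lra). nra. }
  assert (Hc : 0 < c) by (unfold c; nra).
  assert (Hinv : / (x * A / (lj * A + x * c)) = lj / x + c / A)
    by (field; split; nra).
  assert (Hgain : / (d0 / 2 + di) <= c / A).
  { assert (HAc : A <= (d0 / 2 + di) * c) by (unfold A, c; nra).
    apply (Rmult_le_reg_r (A * (d0 / 2 + di))); [nra |].
    replace (/ (d0 / 2 + di) * (A * (d0 / 2 + di))) with A by (field; lra).
    replace (c / A * (A * (d0 / 2 + di))) with ((d0 / 2 + di) * c) by (field; lra).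
    exact HAc. }
  lra.
Qed.

Lemma fixed_point_le (d0 d1 d2 l1 l2 t1 t2 : R) :
  0 < d0 -> 0 < d1 -> 0 < d2 -> 0 < l1 -> 0 < l2 -> 0 < t1 -> 0 < t2 ->
  t1 = phi d0 d1 l2 t2 -> t2 = phi d0 d2 l1 t1 ->
  t1 <= (1 - l1 * l2) * (d0 / 2 + d1).
Proof.
  intros Hd0 Hd1 Hd2 Hl1 Hl2 Ht1 Ht2 E1 E2.
  pose proof (phi_inv_lower_bound d0 d1 l2 t2 Hd0 Hd1 Hl2 Ht2) as B1.
  pose proof (phi_inv_lower_bound d0 d2 l1 t1 Hd0 Hd2 Hl1 Ht1) as B2.
  rewrite <- E1 in B1. rewrite <- E2 in B2.
  set (M := d0 / 2 + d1) in *.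
  assert (HM : 0 < M) by (unfold M; lra).
  assert (Hdrop : l1 / t1 <= / t2).
  { assert (0 < / (d0 / 2 + d2)) by (apply Rinv_0_lt_compat; lra). lra. }
  assert (Hgap : / M <= (1 - l1 * l2) / t1) by (unfold Rdiv in *; nra).
  apply (Rmult_le_reg_r (/ M * / t1)); [apply Rmult_lt_0_compat; apply Rinv_0_lt_compat; lra |].
  replace (t1 * (/ M * / t1)) with (/ M) by (field; lra).
  replace ((1 - l1 * l2) * M * (/ M * / t1)) with ((1 - l1 * l2) / t1) by (field; lra).
  exact Hgap.
Qed.

Lemma pstar_sum_deviation (d0 t1 t2 : R) :
  0 < d0 -> 0 < t1 -> 0 < t2 ->
  Rabs (pstar1 d0 t1 t2 + pstar2 d0 t1 t2 - 1) <= 2 * t1 / d0.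
Proof.
  intros Hd0 Ht1 Ht2.
  unfold pstar1, pstar2.
  set (S := d0 * t1 + d0 * t2 + 2 * t1 * t2).
  assert (HS : 0 < S) by (unfold S; nra).
  replace (d0 * t2 / S + d0 * t1 / S - 1) with (- (2 * t1 * t2 / S))
    by (unfold S in *; field; lra).
  rewrite Rabs_Ropp, Rabs_pos_eq.
  2: { apply Rlt_le, Rdiv_lt_0_compat; nra. }
  apply (Rmult_le_reg_r (S * d0)); [nra |].
  replace (2 * t1 * t2 / S * (S * d0)) with (2 * t1 * t2 * d0) by (field; lra).
  replace (2 * t1 / d0 * (S * d0)) with (2 * t1 * S) by (field; lra).
  unfold S; nra.
Qed.

Lemma fixed_point_small (d0 d1 d2 : R) :
  0 < d0 -> 0 < d1 -> 0 < d2 ->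
  forall delta : R, 0 < delta ->
  exists eta : R, 0 < eta /\
    forall l1 l2 t1 t2 : R,
      0 < l1 -> 0 < l2 -> 1 - eta < l1 * l2 ->
      0 < t1 -> 0 < t2 ->
      t1 = phi d0 d1 l2 t2 -> t2 = phi d0 d2 l1 t1 ->
      t1 < delta /\ t2 < delta.
Proof.
  intros Hd0 Hd1 Hd2 delta Hdelta.
  set (K := (d0 / 2 + d1) + (d0 / 2 + d2)).
  assert (HK : 0 < K) by (unfold K; lra).
  exists (delta / K); split; [apply Rdiv_lt_0_compat; lra |].
  intros l1 l2 t1 t2 Hl1 Hl2 Hgap Ht1 Ht2 E1 E2.
  assert (Hsmall : (1 - l1 * l2) * K < delta).
  { assert (Hcancel : delta / K * K = delta) by (field; lra). nra. }
  pose proof (fixed_point_le d0 d1 d2 l1 l2 t1 t2 Hd0 Hd1 Hd2 Hl1 Hl2 Ht1 Ht2 E1 E2).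
  pose proof (fixed_point_le d0 d2 d1 l2 l1 t2 t1 Hd0 Hd2 Hd1 Hl2 Hl1 Ht2 Ht1 E2 E1).
  rewrite (Rmult_comm l2 l1) in *.
  unfold K in Hsmall. split; nra.
Qed.

Theorem corollary3p5 (d0 d1 d2 : R) :
  0 < d0 -> 0 < d1 -> 0 < d2 ->
  forall eps : R, 0 < eps ->
  exists eta : R, 0 < eta /\
    forall l1 l2 t1 t2 : R,
      0 < l1 -> 0 < l2 -> 1 - eta < l1 * l2 -> l1 * l2 < 1 ->
      0 < t1 -> 0 < t2 ->
      t1 = phi d0 d1 l2 t2 -> t2 = phi d0 d2 l1 t1 ->
      Rabs t1 < eps /\ Rabs t2 < eps /\
      Rabs (pstar1 d0 t1 t2 + pstar2 d0 t1 t2 - 1) < eps.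
Proof.
  intros Hd0 Hd1 Hd2 eps Heps.
  set (delta := Rmin eps (eps * d0 / 2)).
  assert (Hdelta : 0 < delta) by (apply Rmin_glb_lt; nra).
  destruct (fixed_point_small d0 d1 d2 Hd0 Hd1 Hd2 delta Hdelta) as [eta [Heta Hsmall]].
  exists eta; split; [exact Heta |].
  intros l1 l2 t1 t2 Hl1 Hl2 Hgap _ Ht1 Ht2 E1 E2.
  destruct (Hsmall l1 l2 t1 t2 Hl1 Hl2 Hgap Ht1 Ht2 E1 E2) as [T1 T2].
  pose proof (Rmin_l eps (eps * d0 / 2)) as Heps_l.
  pose proof (Rmin_r eps (eps * d0 / 2)) as Heps_r.
  fold delta in Heps_l, Heps_r.
  rewrite (Rabs_pos_eq t1), (Rabs_pos_eq t2) by lra.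
  split; [lra | split; [lra |]].
  eapply Rle_lt_trans; [exact (pstar_sum_deviation d0 t1 t2 Hd0 Ht1 Ht2) |].
  apply (Rmult_lt_reg_r d0); [exact Hd0 |].
  replace (2 * t1 / d0 * d0) with (2 * t1) by (field; lra).
  lra.
Qed.
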